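(* Let $K$ be either an $N$-gon or a star-like tree, with $N$ vertices, and let $z\in\mathbb{R}^N$ be such that the persistence diagram $\mathrm{PH}_0(z)=\{(p_m^b,p_m^d)\}_{m=1}^M$ is typical. Then there is a typical point $z'\in\mathbb{R}^N$ with $\mathrm{PH}_0(z')=\mathrm{PH}_0(z)$.
   Context: The $N$-gon has vertices $\mathbb{Z}/N$ and edges $[i,i+1]$. A star-like tree is a tree with a central vertex of degree $n$ which is the union of $n$ paths (branches) of length at least $2$ meeting only at the central vertex. Vertices of $K$ are labelled $1,\dots,N$, and $z\in\mathbb{R}^N$ is viewed as a function on vertices extended to edges by the maximum over endpoints. $K_r(z)$ is the subcomplex of vertices $i$ with $z_i\le r$ and edges $[i,j]$ with $\max\{z_i,z_j\}\le r$; $\mathrm{PH}_0(z)$ is the degree-$0$ persistence diagram (multiset of (birth, death) pairs, death possibly $\infty$) of the filtration $r\mapsto K_r(z)$. A persistence diagram is typical if the (finite) coordinates of its points are pairwise distinct; a point $z\in\mathbb{R}^N$ is typical if its coordinates are pairwise distinct. *)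

From HB Require Import structures.
From mathcomp Require Import all_boot all_order all_algebra.
From mathcomp Require Import reals.
Set Implicit Arguments. Unset Strict Implicit. Unset Printing Implicit Defensive.
Import Order.TTheory GRing.Theory Num.Theory.
Local Open Scope ring_scope.

(* A graph K on the vertex set 'I_N is given by its (symmetric) adjacency
   relation [adj : rel 'I_N]. *)

Definition ngon_adj (N : nat) : rel 'I_N :=
  fun i j => (nat_of_ord j == (i.+1 %% N)%N) || (nat_of_ord i == (j.+1 %% N)%N).

Definition is_ngon (N : nat) (adj : rel 'I_N) : Prop :=
  (3 <= N)%N /\ adj = @ngon_adj N.

(* Edges of a branch b = [:: v1; ...; vk] attached to the centre c:
   the path c - v1 - v2 - ... - vk (k edges). *)
Definition branch_edges (N : nat) (c : 'I_N) (b : seq 'I_N) : seq ('I_N * 'I_N) :=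
  zip (c :: b) b.

(* Star-like tree: a central vertex c and n >= 1 branches (paths of length
   >= 2, i.e. with >= 2 non-central vertices) meeting only at c, covering all
   vertices; the edges are exactly the edges of the branches. *)
Definition star_like (N : nat) (adj : rel 'I_N) : Prop :=
  exists (c : 'I_N) (bs : seq (seq 'I_N)),
    [/\ (0 < size bs)%N,
        all (fun b => (2 <= size b)%N) bs,
        uniq (c :: flatten bs),
        (forall v : 'I_N, v \in c :: flatten bs) &
        (forall i j : 'I_N, adj i j =
           has (fun b => ((i, j) \in branch_edges c b) || ((j, i) \in branch_edges c b)) bs)].

(* Filtration levels: [Some t, false] is K_t (values <= t), [Some t, true] is
   K_{t^-} = union of K_{t-eps} (values < t), [None, _] is K_infinity = K. *)
Definition in_level (R : realType) (N : nat) (z : 'I_N -> R)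
    (t : option R) (strict : bool) (i : 'I_N) : bool :=
  match t with
  | None => true
  | Some t => if strict then z i < t else z i <= t
  end.

Definition level_rel (R : realType) (N : nat) (adj : rel 'I_N) (z : 'I_N -> R)
    (t : option R) (strict : bool) : rel 'I_N :=
  fun i j => [&& adj i j, in_level z t strict i & in_level z t strict j].

(* Rank of H_0(K_s) -> H_0(K_t) (s <= t): number of connected components of
   K_t containing a vertex of K_s. *)
Definition rk (R : realType) (N : nat) (adj : rel 'I_N) (z : 'I_N -> R)
    (s : R) (ss : bool) (t : option R) (ts : bool) : nat :=
  #|[set [set j | connect (level_rel adj z t ts) i j]
      | i in [set i | in_level z (Some s) ss i]]|.

(* Degree-0 persistence diagram of the sublevel filtration r |-> K_r(z), as a
   multiplicity function (birth b, death d), d = None meaning infinity,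
   via the inclusion-exclusion formula of Cohen-Steiner--Edelsbrunner--Harer. *)
Definition PH0 (R : realType) (N : nat) (adj : rel 'I_N) (z : 'I_N -> R)
    (b : R) (d : option R) : int :=
  match d with
  | None => (rk adj z b false None false)%:Z - (rk adj z b true None false)%:Z
  | Some d =>
      if b < d then
        (rk adj z b false (Some d) true)%:Z - (rk adj z b true (Some d) true)%:Z
        - (rk adj z b false (Some d) false)%:Z + (rk adj z b true (Some d) false)%:Z
      else 0
  end.

Definition coords (R : realType) (b : R) (d : option R) : seq R :=
  b :: (if d is Some x then [:: x] else [::]).

Definition typical_dgm (R : realType) (D : R -> option R -> int) : Prop :=
  [/\ (forall b d, D b d <= 1),
      (forall b d, 0 < D b d -> uniq (coords b d)) &
      (forall b d b' d', 0 < D b d -> 0 < D b' d' -> (b, d) <> (b', d') ->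
         forall x, x \in coords b d -> x \notin coords b' d')].

Definition typical_pt (R : realType) (N : nat) (z : 'I_N -> R) : Prop :=
  injective z.

(* Only the symmetry of the adjacency relation matters.  Ties are removed one
   at a time: if two vertices share the value c, some vertex w with z w = c can
   be pushed slightly up or down, into a gap of the values of z, without
   changing any rank of the filtration, hence without changing PH0.  Raising w
   is harmless when w has a neighbour in K_c and its neighbours there remain
   connected in K_c minus w; lowering it is harmless when it has a lower
   neighbour and all its lower neighbours are already connected in K_{c^-}.
   Typicality of the diagram means that at most one class is born at c, at
   most one dies at c, and not both; counting the components of K_c and
   K_{c^-} then produces such a vertex, as the last vertex of a component of
   K_c grown from a connected core. *)

From HB Require Import structures.
From mathcomp Require Import all_boot all_order all_algebra.
From mathcomp Require Import boolp reals lra zify.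
Set Implicit Arguments. Unset Strict Implicit. Unset Printing Implicit Defensive.
Import Order.TTheory GRing.Theory Num.Theory.

Lemma leq_card_imset_coarser (T U V : finType) (f : T -> U) (g : T -> V) (A : {set T}) :
  {in A &, forall i j, g i = g j -> f i = f j} -> #|f @: A| <= #|g @: A|.
Proof.
move=> gf; pose fg := [set (f i, g i) | i in A].
have -> : f @: A = fst @: fg by rewrite -imset_comp.
have -> : g @: A = snd @: fg by rewrite -imset_comp.
rewrite (card_in_imset (f := snd)) ?leq_imset_card //.
by move=> _ _ /imsetP [i iA ->] /imsetP [j jA ->] /= gij; rewrite (gf i j iA jA gij) gij.
Qed.

Lemma leq_card_imset_merge (T U V : finType) (f : T -> U) (g : T -> V)
    (A : {set T}) (K : {set V}) :
  {in A &, forall i j, g i = g j -> f i = f j} -> K \subset g @: A ->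
  (forall k, k \in K -> exists a b,
     [/\ a \in A, b \in A, g a \notin K, g b = k & f a = f b]) ->
  #|f @: A| + #|K| <= #|g @: A|.
Proof.
move=> gf KgA merge; pose A' := [set i in A | g i \notin K].
have A'A : {subset A' <= A} by move=> i /setIdP [].
have -> : f @: A = f @: A'.
  apply/setP => u; apply/imsetP/imsetP => [[i iA ->] | [i /A'A iA ->]]; last by exists i.
  have [giK | giK] := boolP (g i \in K); last by exists i; rewrite ?inE ?iA.
  have [a [b [aA bA gaK gbi fab]]] := merge _ giK.
  by exists a; rewrite ?inE ?aA // fab; apply: gf; rewrite ?gbi.
have gA' : g @: A' = g @: A :\: K.
  apply/setP => k; rewrite inE; apply/imsetP/andP => [[i /setIdP [iA giK] ->] | ].
    by rewrite giK imset_f.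
  by case=> kK /imsetP [i iA Ek]; exists i; rewrite // inE iA -Ek kK.
have := leq_card_imset_coarser (sub_in2 A'A gf).
rewrite gA' cardsD (setIidPr KgA) => le_fA'.
by have := subset_leq_card KgA; lia.
Qed.

Section Components.
Variable T : finType.
Implicit Types (e : rel T) (C Q S : {set T}).

Definition component e (x : T) : {set T} := [set y | connect e x y].

Definition restrict e C : rel T := [rel x y | [&& e x y, x \in C & y \in C]].

Lemma restrict_sym e C : symmetric e -> symmetric (restrict e C).
Proof. by move=> se x y; rewrite /restrict /= se (andbC (x \in C)). Qed.

Lemma connect_homo (U : finType) e (e' : rel U) (f : T -> U) :
  {homo f : x y / e x y >-> connect e' x y} ->
  {homo f : x y / connect e x y >-> connect e' x y}.
Proof.
move=> fe x y /connectP [p]; elim: p x => [|a p IHp] x /=; first by move=> _ ->.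
by case/andP=> exa pa ly; exact: connect_trans (fe _ _ exa) (IHp _ pa ly).
Qed.

Lemma connect_exit_edge e (P : pred T) x y :
  connect e x y -> P x -> ~~ P y -> exists a b, [/\ P a, ~~ P b & e a b].
Proof.
move=> /connectP [p]; elim: p x => [|a p IHp] x /=; first by move=> _ -> ->.
case/andP=> exa pa ly Px nPy; case Pa: (P a); first exact: IHp pa ly Pa nPy.
by exists x, a; rewrite Pa.
Qed.

Lemma connect_restrictS e C Q : C \subset Q ->
  subrel (connect (restrict e C)) (connect (restrict e Q)).
Proof.
move=> CQ; apply: connect_sub => x y /and3P [exy xC yC]; apply: connect1.
by rewrite /restrict /= exy !(subsetP CQ).
Qed.

Lemma eq_component e : symmetric e -> forall x y,
  (component e x == component e y) = connect e x y.
Proof.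
move=> se x y; have cs := sym_connect_sym se.
apply/eqP/idP => [Exy | cxy].
  have : y \in component e y by rewrite inE connect0.
  by rewrite -Exy inE.
by apply/setP => u; rewrite !inE (same_connect cs cxy).
Qed.

Lemma component_closed e r x y :
  e x y -> x \in component e r -> y \in component e r.
Proof. by rewrite !inE => exy /connect_trans; apply; apply: connect1. Qed.

Lemma connect_restrict_component e r x :
  x \in component e r -> connect (restrict e (component e r)) r x.
Proof.
rewrite inE => /connectP [p]; elim/last_ind: p x => [|p a IHp] x /=.
  by move=> _ ->.
rewrite rcons_path last_rcons => /andP [pp ea] ->.
have crl : connect e r (last r p) by apply/connectP; exists p.
apply: connect_trans (IHp _ pp erefl) (connect1 _).
by rewrite /restrict /= ea !inE crl (connect_trans crl (connect1 ea)).
Qed.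

Lemma exists_boundary_edge e Q C r x :
  C \subset Q -> r \in C -> x \in Q :\: C ->
  connect (restrict e Q) r x ->
  exists a b, [/\ a \in C, b \in Q :\: C & e a b].
Proof.
move=> CQ rC; rewrite inE => /andP [xC _] rx.
have [a [b [aC bC /and3P [eab _ bQ]]]] := connect_exit_edge (P := [in C]) rx rC xC.
by exists a, b; rewrite inE bC bQ.
Qed.

Lemma exists_removable_vertex e Q C r : symmetric e ->
  C \subset Q -> r \in C -> Q :\: C != set0 ->
  {in C, forall x, connect (restrict e C) r x} ->
  {in Q, forall x, connect (restrict e Q) r x} ->
  exists2 w, w \in Q :\: C &
    {in Q :\ w, forall x, connect (restrict e (Q :\ w)) r x} /\
    exists2 n, n \in Q :\ w & e w n.
Proof.
(* w is the last vertex of Q reached when C is grown one boundary vertex at a time. *)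
move=> se CQ rC; have [n] := ubnP #|Q :\: C|; elim: n C CQ rC => // n IHn C CQ rC.
rewrite ltnS => QCn /set0Pn [x xQC] Cconn Qconn.
have [a [b [aC bQC eab]]] :=
  exists_boundary_edge CQ rC xQC (Qconn x (subsetP (subsetDl _ _) _ xQC)).
have /setDP [bQ bC] := bQC.
have [QCb0 | [w' w'QCb]] := set_0Vmem ((Q :\: C) :\ b).
  have QbC : Q :\ b = C.
    apply/setP => u; rewrite !inE; apply/andP/idP => [[ub uQ] | uC].
      apply/negPn/negP => uC; have : u \in set0 by rewrite -QCb0 !inE ub uC uQ.
      by rewrite inE.
    by split; [apply: contraNneq bC => <- | exact: subsetP CQ u uC].
  exists b => //; split; first by rewrite QbC.
  by exists a; rewrite ?QbC // se.
have EQbC : Q :\: (b |: C) = (Q :\: C) :\ b by rewrite setDDl setUC.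
have [||||||w] := IHn (b |: C).
- by rewrite subUset sub1set bQ CQ.
- by rewrite !inE rC orbT.
- by move: QCn; rewrite EQbC (cardsD1 b (Q :\: C)) bQC.
- by apply/set0Pn; exists w'; rewrite EQbC.
- move=> u; rewrite !inE => /orP [/eqP -> | uC].
    apply: connect_trans (connect_restrictS (subsetUr _ _) (Cconn a aC)) _.
    by apply: connect1; rewrite /restrict /= eab !inE aC eqxx orbT.
  by apply: connect_restrictS (Cconn u uC); apply: subsetUr.
- exact: Qconn.
by rewrite EQbC => /setD1P [_ wQC] wprop; exists w.
Qed.

Lemma connect_restrict_setC1 e v n0 : symmetric e -> n0 != v -> e v n0 ->
  {in [set~ v] &, forall n1 n2, e v n1 -> e v n2 ->
     connect (restrict e [set~ v]) n1 n2} ->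
  {in [set~ v] &, connect e =2 connect (restrict e [set~ v])}.
Proof.
move=> se n0v evn0 nbr x y xv yv; apply/idP/idP; last first.
  by apply: connect_sub => a b /and3P [eab _ _]; apply: connect1.
pose f u := if u == v then n0 else u.
have fv u : u \in [set~ v] -> f u = u by rewrite /f !inE => /negPf ->.
rewrite -{2}(fv x xv) -{2}(fv y yv); apply: connect_homo => a b eab.
have n0C : n0 \in [set~ v] by rewrite !inE.
have inC u : u != v -> u \in [set~ v] by rewrite !inE.
rewrite /f; case: (eqVneq a v) => [av | /inC aC]; case: (eqVneq b v) => [bv | /inC bC].
- exact: connect0.
- by subst a; apply: nbr.
- by subst b; apply: nbr; rewrite // se.
- by apply: connect1; rewrite /restrict /= eab aC bC.
Qed.

Lemma card_component_imsetU1 e S v n : symmetric e ->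
  n \in S -> connect e v n -> #|component e @: (v |: S)| = #|component e @: S|.
Proof.
move=> se nS cvn; rewrite imsetU1 (setUidPr _) // sub1set.
by rewrite (eqP (_ : component e v == component e n)) ?eq_component ?imset_f.
Qed.

Lemma eq_card_component_imset e e' S : symmetric e -> symmetric e' ->
  {in S &, connect e =2 connect e'} ->
  #|component e @: S| = #|component e' @: S|.
Proof.
move=> se se' ee'; apply/eqP; rewrite eqn_leq.
apply/andP; split; apply: leq_card_imset_coarser => i j iS jS /eqP.
  by rewrite eq_component // -ee' // -eq_component // => /eqP.
by rewrite eq_component // ee' // -eq_component // => /eqP.
Qed.

End Components.

Section Telescope.
Variables (d : Order.disp_t) (X : orderType d) (T : finType) (z : T -> X).
Variables (V : zmodType) (F P : X -> V) (F_end : V) (x0 : X).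
Hypothesis F_top : forall x, (x0 <= x)%O -> (forall i, (z i <= x)%O) -> F x = F_end.
Hypothesis F_next : forall x i, (x0 <= x)%O -> (x < z i)%O ->
  (forall j, (x < z j)%O -> (z i <= z j)%O) -> F x = (P (z i) + F (z i))%R.

Lemma telescope x : (x0 <= x)%O ->
  F x = (F_end + \sum_(v <- undup (codom z) | (x < v)%O) P v)%R.
Proof.
have [n] := ubnP #|[set i | (x < z i)%O]|; elim: n x => // n IHn x.
rewrite ltnS => card_above x0x.
case: (pickP [pred i | (x < z i)%O]) => [i0 xi0 | none]; last first.
  rewrite big1_seq ?addr0 => [|v /andP [xv]]; last first.
    by rewrite mem_undup => /codomP [i vi]; move: (none i); rewrite /= -vi xv.
  by apply: F_top => // i; have := none i; rewrite /= leNgt => ->.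
case: (arg_minP z xi0) => i /= xi imin.
have zi_min j : (x < z j)%O -> (z i <= z j)%O by apply: imin.
rewrite (F_next x0x xi zi_min) IHn; last 2 first.
- apply: leq_trans card_above; apply: proper_card; rewrite properE.
  apply/andP; split.
    by apply/subsetP => j; rewrite !inE; apply: lt_trans.
  by apply/subsetPn; exists i; rewrite !inE ?ltxx.
- exact: le_trans x0x (ltW xi).
rewrite addrCA; congr (_ + _)%R; symmetry.
have ziV : z i \in undup (codom z) by rewrite mem_undup codom_f.
rewrite -big_filter (bigD1_seq (z i)) ?mem_filter ?xi ?ziV ?filter_uniq ?undup_uniq //=.
rewrite big_filter_cond; congr (_ + _)%R; rewrite big_seq_cond [RHS]big_seq_cond.
apply: eq_bigl => v; rewrite mem_undup.
case: (boolP (v \in codom z)) => //= /codomP [j ->].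
case: (ltP x (z j)) => [xj | jx]; first by rewrite lt_neqAle eq_sym (zi_min j xj) andbT.
by apply/esym/negbTE; rewrite -leNgt (le_trans jx (ltW xi)).
Qed.

End Telescope.

Local Open Scope ring_scope.

Lemma sum_le1_unique_pos (R : realDomainType) (I : eqType) (r : seq I)
    (P : pred I) (f : I -> R) :
  uniq r -> (forall i, f i <= 1) -> (forall i j, 0 < f i -> 0 < f j -> i = j) ->
  \sum_(i <- r | P i) f i <= 1.
Proof.
move=> + f_le1 f_pos_uniq; elim: r => [|i r IHr]; first by rewrite big_nil ler01.
case/andP=> ir ur; rewrite big_cons; case: ifP => _; last exact: IHr.
have [fi_pos | fi_le0] := ltrP 0 (f i); last first.
  by rewrite -[1]add0r lerD ?IHr.
rewrite -[1]addr0 lerD ?f_le1 // big_seq_cond sumr_le0 // => j /andP [jr _].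
rewrite leNgt; apply/negP => /(f_pos_uniq _ _ fi_pos) ij.
by rewrite ij jr in ir.
Qed.

Lemma sum_gt0_has_pos (R : realDomainType) (I : eqType) (r : seq I)
    (P : pred I) (f : I -> R) :
  0 < \sum_(i <- r | P i) f i -> has (fun i => P i && (0 < f i)) r.
Proof.
apply: contraLR => /hasPn no_pos; rewrite -leNgt big_seq_cond sumr_le0 // => i.
by case/andP=> ir Pi; move: (no_pos i ir); rewrite Pi -leNgt.
Qed.

Section Levels.
Variables (R : realType) (N : nat) (adj : rel 'I_N).
Hypothesis adj_sym : symmetric adj.
Implicit Types (z : 'I_N -> R).

Lemma level_rel_sym z t ts : symmetric (level_rel adj z t ts).
Proof. by move=> i j; rewrite /level_rel adj_sym (andbC (in_level z t ts i)). Qed.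

Lemma rkE z s ss t ts : rk adj z s ss t ts =
  #|component (level_rel adj z t ts) @: [set i | in_level z (Some s) ss i]|.
Proof. by []. Qed.

Lemma eq_rk z z' s ss t ts s' ss' t' ts' :
  in_level z (Some s) ss =1 in_level z' (Some s') ss' ->
  in_level z t ts =1 in_level z' t' ts' ->
  rk adj z s ss t ts = rk adj z' s' ss' t' ts'.
Proof.
move=> eS eT; rewrite !rkE.
have -> : level_rel adj z t ts = level_rel adj z' t' ts'.
  by apply/funext => i; apply/funext => j; rewrite /level_rel !eT.
suff -> : [set i | in_level z (Some s) ss i] = [set i | in_level z' (Some s') ss' i] by [].
by apply/setP => i; rewrite !inE eS.
Qed.

Lemma in_level_connect z t ts x y : connect (level_rel adj z t ts) x y ->
  in_level z t ts x -> in_level z t ts y.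
Proof.
move=> cxy xL; apply/negPn/negP => yL.
by have [a [b [_ /negP bL /and3P [_ _ /bL]]]] := connect_exit_edge cxy xL yL.
Qed.

Lemma le_in_level z z' t ts i j :
  z' j <= z i -> in_level z t ts i -> in_level z' t ts j.
Proof. by case: t ts => [x|] [] //= ji; [apply: le_lt_trans | apply: le_trans]. Qed.

Lemma in_level_lt z b x ss ts i :
  b < x -> in_level z (Some b) ss i -> in_level z (Some x) ts i.
Proof. by case: ss ts => [] [] /= bx zb; lra. Qed.

Definition raisable z w :=
  let K := level_rel adj z (Some (z w)) false in
  (exists2 n, n != w & K w n) /\
  {in [set~ w] &, forall n1 n2, K w n1 -> K w n2 ->
     connect (restrict K [set~ w]) n1 n2}.

Section Raise.
Variables (z : 'I_N -> R) (v : 'I_N) (c : R).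
Hypothesis v_raisable : raisable z v.
Hypothesis zv_lt_c : z v < c.
Hypothesis no_value_between : forall i, ~~ (z v < z i < c).
Let z' := [eta z with v |-> c].
Let Kv := level_rel adj z (Some (z v)) false.

Lemma in_level_raise t ts :
  in_level z' t ts =1 in_level z t ts \/
  in_level z t ts =1 (fun i => z i <= z v) /\
  in_level z' t ts =1 (fun i => (z i <= z v) && (i != v)).
Proof.
case: t => [x|]; last by left.
have [same_v | diff_v] := eqVneq (in_level z' (Some x) ts v) (in_level z (Some x) ts v).
  by left => i; case: (eqVneq i v) => [-> // | /negPf iv]; rewrite /= iv.
have v'_v : in_level z' (Some x) ts v -> in_level z (Some x) ts v.
  by apply: le_in_level; rewrite /= eqxx ltW.
have vL : in_level z (Some x) ts v.
  apply: contraNT diff_v => nvL.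
  by rewrite (negbTE nvL) (negbTE (contra v'_v nvL)).
have nv'L : ~~ in_level z' (Some x) ts v.
  by apply: contraNN diff_v => v'L; rewrite v'L vL.
have Lz i : in_level z (Some x) ts i = (z i <= z v).
  apply/idP/idP => [iL | iv]; last exact: le_in_level vL.
  rewrite leNgt; apply/negP => vi; move/negP: nv'L; apply; apply: le_in_level iL.
  by have := no_value_between i; rewrite /= eqxx vi /= -leNgt.
right; split=> [|i]; first exact: Lz.
case: (eqVneq i v) => [-> | /negPf iv].
  by rewrite andbF; apply/negbTE.
by rewrite andbT -Lz /= iv.
Qed.

Lemma rk_raise s ss t ts :
  (forall i, in_level z (Some s) ss i -> in_level z t ts i) ->
  (forall i, in_level z' (Some s) ss i -> in_level z' t ts i) ->
  rk adj z' s ss t ts = rk adj z s ss t ts.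
Proof.
move=> mono mono'; have [[n0 n0v Kvn0] nbrs] := v_raisable.
have /and3P [avn0 _ /= zn0] := Kvn0.
rewrite !rkE; set S' := [set i | in_level z' (Some s) ss i].
have -> : #|component (level_rel adj z t ts) @: [set i | in_level z (Some s) ss i]| =
          #|component (level_rel adj z t ts) @: S'|.
  have [SS' | [Sv S'v]] := in_level_raise (Some s) ss.
    suff -> : [set i | in_level z (Some s) ss i] = S' by [].
    by apply/setP => i; rewrite !inE SS'.
  have -> : [set i | in_level z (Some s) ss i] = v |: S'.
    apply/setP => i; rewrite !inE Sv S'v.
    by case: eqVneq => [-> | _] /=; rewrite ?lexx ?andbT.
  apply: (card_component_imsetU1 (n := n0)); first exact: level_rel_sym.
    by rewrite inE S'v zn0 n0v.
  by apply: connect1; rewrite /level_rel avn0 !mono ?Sv ?lexx.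
have [TT' | [Tv T'v]] := in_level_raise t ts.
  suff -> : level_rel adj z' t ts = level_rel adj z t ts by [].
  by apply/funext => a; apply/funext => b; rewrite /level_rel !TT'.
apply: eq_card_component_imset; try exact: level_rel_sym.
move=> i j; rewrite !inE => /mono' iT /mono' jT.
have eK : level_rel adj z t ts =2 Kv by move=> a b; rewrite /level_rel /Kv /= !Tv.
have eK' : level_rel adj z' t ts =2 restrict Kv [set~ v].
  move=> a b; rewrite /restrict /Kv /level_rel /= !T'v !inE.
  by case: (adj a b); case: (z a <= z v); case: (z b <= z v); case: (a != v); case: (b != v).
rewrite (eq_connect eK) (eq_connect eK').
rewrite (connect_restrict_setC1 (level_rel_sym _ _ _) n0v Kvn0 nbrs) // !inE.
  by move: iT; rewrite T'v => /andP [].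
by move: jT; rewrite T'v => /andP [].
Qed.

Lemma PH0_raise : PH0 adj z' = PH0 adj z.
Proof.
apply/funext => b; apply/funext => [[x|]] /=; last by rewrite !rk_raise.
by case: ifP => // bx; rewrite !rk_raise // => i; apply: in_level_lt.
Qed.

End Raise.

Definition lowerable z w :=
  (exists n, adj w n && (z n < z w)) /\
  (forall n1 n2, adj w n1 -> adj w n2 -> z n1 < z w -> z n2 < z w ->
     connect (level_rel adj z (Some (z w)) true) n1 n2).

Lemma PH0_lower z v c : lowerable z v -> c < z v ->
  (forall i, ~~ (c <= z i < z v)) -> PH0 adj [eta z with v |-> c] = PH0 adj z.
Proof.
move=> [[n /andP [avn znv]] nbrs] cv gap; set y := [eta z with v |-> c].
have yv : y v = c by rewrite /= eqxx.
have yE i : i != v -> y i = z i by move=> /negPf iv; rewrite /= iv.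
have below_c i : z i < z v -> z i < c.
  by move=> iv; move: (gap i); rewrite iv andbT -ltNge.
have below_v i : z i < z v -> i != v by move=> iv; apply/eqP => ev; rewrite ev ltxx in iv.
(* Lowering v to c is undone by raising it back to z v. *)
have yK : [eta y with v |-> z v] =1 z by move=> i /=; case: eqVneq => [-> | _].
rewrite -[X in _ = PH0 adj X](funext yK).
symmetry; apply: PH0_raise; rewrite ?yv //; last first.
  move=> i; case: (eqVneq i v) => [-> | iv]; rewrite ?yv ?ltxx ?andbF // yE //.
  by apply: contraNN (gap i) => /andP [/ltW -> ->].
rewrite /raisable /= eqxx; split=> [|n1 n2].
  exists n; first exact: below_v.
  by rewrite /level_rel /= avn eqxx lexx (negPf (below_v _ znv)) ltW ?below_c.
rewrite !inE /level_rel => n1v n2v /and3P [a1 _ /= z1] /and3P [a2 _ /= z2].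
rewrite (negPf n1v) in z1; rewrite (negPf n2v) in z2.
have lt_v j : z j <= c -> z j < z v by move=> jc; apply: le_lt_trans jc cv.
apply: connect_sub (nbrs _ _ a1 a2 (lt_v _ z1) (lt_v _ z2)) => a b.
case/and3P=> ab /= za zb; apply: connect1.
rewrite /restrict /level_rel /= !inE ab !below_v // (negPf (below_v _ za)).
by rewrite (negPf (below_v _ zb)) !ltW ?below_c.
Qed.

End Levels.

Section Events.
Variables (R : realType) (N : nat) (adj : rel 'I_N) (z : 'I_N -> R).

(* Classes born at c still alive at x, and classes born before x dying at c. *)
Definition born_alive (c x : R) : int :=
  (rk adj z c false (Some x) false)%:Z - (rk adj z c true (Some x) false)%:Z.

Definition dying_before (c x : R) : int :=
  (rk adj z x true (Some c) true)%:Z - (rk adj z x true (Some c) false)%:Z.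

Lemma born_alive_sum c x : c <= x -> born_alive c x =
  PH0 adj z c None + \sum_(v <- undup (codom z) | x < v) PH0 adj z c (Some v).
Proof.
apply: (telescope (x0 := c)) => [y _ below | y i cy yi imin].
  rewrite /born_alive /PH0.
  by congr (_%:Z - _%:Z); apply: eq_rk => // j; rewrite /= below.
have cz : c < z i by apply: le_lt_trans cy yi.
have Lx : in_level z (Some y) false =1 in_level z (Some (z i)) true.
  move=> j /=; apply/idP/idP => [jy | ji]; first exact: le_lt_trans jy yi.
  by rewrite leNgt; apply: contraTN ji => /imin; rewrite -leNgt.
rewrite /born_alive /PH0 cz !(eq_rk adj (frefl _) Lx); lia.
Qed.

Lemma dying_before_sum c x : x <= c -> dying_before c x =
  \sum_(v <- undup (codom z) | v < x) PH0 adj z v (Some c).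
Proof.
move=> xc; rewrite -[RHS]add0r.
(* Telescoping downwards is telescoping in the dual order. *)
apply: (@telescope _ R^d _ z _ _ _ _ c) xc => [y _ above | y i yc iy imax].
  rewrite /dying_before !rkE (_ : [set j | in_level z (Some y) true j] = set0)
    ?imset0 ?cards0 //.
  by apply/setP => j; rewrite !inE /= ltNge -leEdual above.
rewrite leEdual in yc; rewrite ltEdual in iy.
have zc : z i < c by apply: lt_le_trans iy yc.
have Ly : in_level z (Some y) true =1 in_level z (Some (z i)) false.
  move=> j /=; apply/idP/idP => [jy | ji]; first exact: imax.
  exact: le_lt_trans ji iy.
by rewrite /dying_before /PH0 zc !(eq_rk adj Ly (frefl _)); lia.
Qed.

Lemma typical_dgm_coords_inj (D : R -> option R -> int) b d b' d' x :
  typical_dgm D -> 0 < D b d -> 0 < D b' d' ->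
  x \in coords b d -> x \in coords b' d' -> (b, d) = (b', d').
Proof.
case=> _ _ disj pos pos' xbd xbd'; have [//|/eqP ne] := eqVneq (b, d) (b', d').
by move: (disj _ _ _ _ pos pos' ne x xbd); rewrite xbd'.
Qed.

Lemma coords_birth (b : R) d : b \in coords b d.
Proof. by rewrite inE eqxx. Qed.

Lemma coords_death (b d : R) : d \in coords b (Some d).
Proof. by rewrite !inE eqxx orbT. Qed.

Section TypicalLevel.
Variable c : R.
Hypothesis typ : typical_dgm (PH0 adj z).

Let born_seq := None :: [seq Some v | v <- undup (codom z) & c < v].

Lemma born_alive_seq : born_alive c c = \sum_(d <- born_seq) PH0 adj z c d.
Proof. by rewrite born_alive_sum // big_cons big_map big_filter. Qed.

Lemma born_alive_le1 : born_alive c c <= 1.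
Proof.
rewrite born_alive_seq sum_le1_unique_pos // => [|d|d d' pos pos'].
- rewrite /= map_inj_uniq ?filter_uniq ?undup_uniq ?andbT //; last by move=> ? ? [].
  by apply/mapP => [[]].
- by case: typ.
by case: (typical_dgm_coords_inj typ pos pos' (coords_birth c d) (coords_birth c d')).
Qed.

Lemma dying_before_le1 : dying_before c c <= 1.
Proof.
rewrite dying_before_sum // sum_le1_unique_pos ?undup_uniq // => [b|b b' pos pos'].
  by case: typ.
by case: (typical_dgm_coords_inj typ pos pos' (coords_death b c) (coords_death b' c)).
Qed.

Lemma not_born_and_dying : ~ (0 < born_alive c c /\ 0 < dying_before c c).
Proof.
rewrite born_alive_seq dying_before_sum // => -[/sum_gt0_has_pos/hasP [d _ /= pos]].
move=> /sum_gt0_has_pos/hasP [b _ /andP [bc]].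
rewrite -/(PH0 adj z b (Some c)) => pos'.
have [bc' _] := typical_dgm_coords_inj typ pos pos' (coords_birth c d) (coords_death b c).
by rewrite bc' ltxx in bc.
Qed.

End TypicalLevel.
End Events.

Section TiedLevel.
Variables (R : realType) (N : nat) (adj : rel 'I_N) (z : 'I_N -> R) (c : R).
Hypothesis adj_sym : symmetric adj.

Let Kc := level_rel adj z (Some c) false.
Let Kc_ := level_rel adj z (Some c) true.
(* Components of K_c, those meeting K_{c^-}, and components of K_{c^-}: there
   are ncomp - nold births and nbelow - nold merges at c. *)
Local Notation ncomp := (rk adj z c false (Some c) false).
Local Notation nold := (rk adj z c true (Some c) false).
Local Notation nbelow := (rk adj z c true (Some c) true).

Let Kc_sym : symmetric Kc := level_rel_sym adj_sym z _ _.
Let Kc__sym : symmetric Kc_ := level_rel_sym adj_sym z _ _.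

Lemma connect_level_strict : subrel (connect Kc_) (connect Kc).
Proof.
apply: connect_sub => a b /and3P [ab za zb]; apply: connect1.
by rewrite /Kc /level_rel ab /= !ltW.
Qed.

Lemma connect_restrict_level_strict r x : x \in component Kc_ r ->
  connect (restrict Kc (component Kc_ r)) r x.
Proof.
move/connect_restrict_component; apply: connect_sub => a b /and3P [/and3P [ab za zb] aC bC].
by apply: connect1; rewrite /restrict /Kc /level_rel /= ab aC bC !ltW.
Qed.

Lemma nbelow_merged (K : {set {set 'I_N}}) :
  K \subset component Kc_ @: [set i | z i < c] ->
  (forall k, k \in K -> exists a b, [/\ z a < c, z b < c,
     component Kc_ a \notin K, component Kc_ b = k & connect Kc a b]) ->
  (nold + #|K| <= nbelow)%N.
Proof.
move=> KS merge; rewrite !rkE; apply: leq_card_imset_merge => // [i j _ _ | k /merge].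
  move/eqP; rewrite !eq_component // => /connect_level_strict cij.
  by apply/eqP; rewrite eq_component.
case=> a [b [za zb aK bk ab]]; exists a, b; split; rewrite ?inE //.
by apply/eqP; rewrite eq_component.
Qed.

Lemma ncomp_new (K : {set {set 'I_N}}) :
  K \subset component Kc @: [set i | z i <= c] ->
  (forall k l, k \in K -> z l < c -> component Kc l != k) ->
  (nold + #|K| <= ncomp)%N.
Proof.
move=> KS new; rewrite !rkE.
have sub : component Kc @: [set i | z i < c] \subset component Kc @: [set i | z i <= c] :\: K.
  apply/subsetP => k /imsetP [l]; rewrite inE => zl ->.
  by rewrite !inE imset_f ?inE ?ltW // andbT; apply/negP => /new /(_ zl); rewrite eqxx.
have := subset_leq_card sub; rewrite cardsD (setIidPr KS).
move=> le_old; apply: leq_trans (leq_add le_old (leqnn #|K|)) _.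
by rewrite subnK ?subset_leq_card.
Qed.

Lemma ltn_nold_nbelow a b : z a < c -> z b < c ->
  ~~ connect Kc_ a b -> connect Kc a b -> (nold < nbelow)%N.
Proof.
move=> za zb nab ab; rewrite -addn1 -(cards1 (component Kc_ b)).
apply: nbelow_merged => [|k]; first by rewrite sub1set imset_f ?inE.
by rewrite inE => /eqP ->; exists a, b; rewrite inE eq_component.
Qed.

Lemma ltnS_nold_nbelow a1 b1 a2 b2 :
  z a1 < c -> z b1 < c -> z a2 < c -> z b2 < c ->
  ~~ connect Kc_ b1 b2 -> ~~ connect Kc_ a1 b1 -> ~~ connect Kc_ a1 b2 ->
  ~~ connect Kc_ a2 b1 -> ~~ connect Kc_ a2 b2 ->
  connect Kc a1 b1 -> connect Kc a2 b2 -> (nold.+2 <= nbelow)%N.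
Proof.
move=> za1 zb1 za2 zb2 n12 n11 n12' n21 n22 c1 c2.
have := @nbelow_merged [set component Kc_ b1; component Kc_ b2].
rewrite cards2 eq_component // n12 addn2; apply.
  by rewrite subUset !sub1set !imset_f ?inE.
move=> k; rewrite !inE => /orP [] /eqP ->.
  by exists a1, b1; rewrite !inE !eq_component // negb_or n11 n12'.
by exists a2, b2; rewrite !inE !eq_component // negb_or n21 n22.
Qed.

Lemma ltnS_nold_ncomp x y : z x <= c -> z y <= c ->
  (forall l, z l < c -> ~~ connect Kc x l) ->
  (forall l, z l < c -> ~~ connect Kc y l) ->
  ~~ connect Kc x y -> (nold.+2 <= ncomp)%N.
Proof.
move=> zx zy hx hy nxy.
have := @ncomp_new [set component Kc x; component Kc y].
rewrite cards2 eq_component // nxy addn2; apply.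
  by rewrite subUset !sub1set !imset_f ?inE.
move=> k l; rewrite !inE => /orP [] /eqP -> zl; rewrite eq_component //
  (sym_connect_sym Kc_sym); [exact: hx | exact: hy].
Qed.

Lemma connect_below_of_no_birth x : (ncomp <= nold)%N -> z x <= c ->
  exists2 l, z l < c & connect Kc x l.
Proof.
move=> no_birth zx; have [//|none] := pselect (exists2 l, z l < c & connect Kc x l).
suff : (nold + #|[set component Kc x]| <= ncomp)%N.
  by rewrite cards1 addn1 ltnNge no_birth.
apply: ncomp_new => [|k l]; first by rewrite sub1set imset_f ?inE.
rewrite inE => /eqP -> zl; rewrite eq_component // (sym_connect_sym Kc_sym).
by apply/negP => xl; apply: none; exists l.
Qed.

Lemma exists_raisable_in_component q (C0 : {set 'I_N}) r :
  C0 \subset component Kc q -> r \in C0 -> component Kc q :\: C0 != set0 ->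
  {in C0, forall x, connect (restrict Kc C0) r x} ->
  {in component Kc q :\: C0, forall w, c <= z w} ->
  exists w, z w = c /\ raisable adj z w.
Proof.
move=> C0Q rC0; have Qr : component Kc q = component Kc r.
  by apply/eqP; rewrite eq_component //; move: (subsetP C0Q r rC0); rewrite inE.
rewrite Qr in C0Q * => QC0 C0conn high; have [w wQC0 [Qwconn [n nQw Kwn]]] :=
  exists_removable_vertex Kc_sym C0Q rC0 QC0 C0conn (@connect_restrict_component _ Kc r).
have /and3P [_ /= zwc _] := Kwn.
have zw : z w = c by apply/eqP; rewrite eq_le zwc high.
have wQ : w \in component Kc r by case/setDP: wQC0.
exists w; split => //; rewrite /raisable zw; split.
  by exists n => //; move: nQw; rewrite !inE => /andP [].
have conn_r m : m != w -> Kc w m -> connect (restrict Kc [set~ w]) r m.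
  move=> mw Kwm; apply: connect_restrictS (Qwconn m _).
    by apply/subsetP => u; rewrite !inE => /andP [].
  by rewrite in_setD1 mw (component_closed Kwm wQ).
move=> n1 n2; rewrite !inE => n1w n2w Kwn1 Kwn2.
apply: connect_trans (conn_r n2 n2w Kwn2).
by rewrite (sym_connect_sym (restrict_sym _ Kc_sym)) conn_r.
Qed.

Lemma raisable_of_no_lower_nbr v1 v2 : (ncomp <= nold + 1)%N ->
  v1 != v2 -> z v1 = c -> z v2 = c ->
  (forall w a, z w = c -> adj w a -> c <= z a) ->
  exists w, z w = c /\ raisable adj z w.
Proof.
move=> births v12 zv1 zv2 no_lower.
have stays x y : connect Kc x y -> z x = c -> z y = c.
  move=> cxy /eqP zx; apply/eqP/negPn/negP => zy.
  have [a [b [/eqP za zb /and3P [ab _ /= zbc]]]] :=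
    connect_exit_edge (P := fun i => z i == c) cxy zx zy.
  by move: zb; rewrite eq_le zbc (no_lower a b za ab).
have cv12 : connect Kc v1 v2.
  apply: contraTT births => nv12; rewrite -ltnNge addn1.
  apply: ltnS_nold_ncomp nv12; rewrite ?zv1 ?zv2 // => l zl; apply/negP => /stays;
    by rewrite ?zv1 ?zv2 => /(_ erefl) zl'; rewrite zl' ltxx in zl.
apply: (@exists_raisable_in_component v1 [set v1] v1).
- by rewrite sub1set inE connect0.
- exact: set11.
- by apply/set0Pn; exists v2; rewrite !inE eq_sym v12 cv12.
- by move=> x; rewrite inE => /eqP ->.
- by move=> w; rewrite !inE => /andP [_ /stays/(_ zv1) ->].
Qed.

Lemma raisable_in_merge_component w0 a b vs : (nbelow <= nold + 1)%N ->
  z w0 = c -> adj w0 a -> adj w0 b -> z a < c -> z b < c -> ~~ connect Kc_ a b ->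
  vs != w0 -> z vs = c -> connect Kc w0 vs ->
  exists w, z w = c /\ raisable adj z w.
Proof.
move=> deaths zw0 w0a w0b za zb nab vsw0 zvs w0vs.
have Kw0 x : adj w0 x -> z x < c -> Kc w0 x.
  by move=> w0x zx; rewrite /Kc /level_rel w0x /= zw0 lexx ltW.
have ca : connect Kc w0 a := connect1 (Kw0 a w0a za).
have cb : connect Kc w0 b := connect1 (Kw0 b w0b zb).
have cab : connect Kc a b by apply: connect_trans cb; rewrite (sym_connect_sym Kc_sym).
pose C0 := component Kc_ a :|: component Kc_ b :|: [set w0].
have w0C0 : w0 \in C0 by rewrite !inE eqxx orbT.
have via y : adj w0 y -> z y < c -> component Kc_ y \subset C0 ->
    {in component Kc_ y, forall x, connect (restrict Kc C0) w0 x}.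
  move=> w0y zy yC0 x yx; apply: (@connect_trans _ _ y).
    by apply: connect1; rewrite /restrict /= Kw0 // w0C0 (subsetP yC0) ?inE.
  by apply: (connect_restrictS yC0); apply: connect_restrict_level_strict.
apply: (@exists_raisable_in_component w0 C0 w0) => //.
- apply/subsetP => x; rewrite !inE => /orP [/orP [] | /eqP -> //].
    by move/connect_level_strict; apply: connect_trans.
  by move/connect_level_strict; apply: connect_trans.
- apply/set0Pn; exists vs; rewrite !inE w0vs (negPf vsw0) orbF andbT.
  by apply/norP; split; apply/negP => /in_level_connect h;
    [move: (h za) | move: (h zb)]; rewrite /= zvs ltxx.
- move=> x; rewrite !inE => /orP [/orP [ax | bx] | /eqP -> //].
    by apply: (via a); rewrite ?inE // /C0 -setUA subsetUl.
  by apply: (via b); rewrite ?inE // /C0 -setUA setUCA subsetUl.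
move=> w; rewrite !inE !negb_or => /andP [/andP [/andP [naw nbw] _] w0w].
rewrite leNgt; apply/negP => zw.
have caw : connect Kc a w by apply: connect_trans w0w; rewrite (sym_connect_sym Kc_sym).
have := leq_trans (ltnS_nold_nbelow za zb za zw nbw nab naw nab naw cab caw) deaths.
by rewrite addn1 ltnn.
Qed.

Lemma raisable_off_merge_component vs l a b : (nbelow <= nold + 1)%N ->
  z a < c -> z b < c -> ~~ connect Kc_ a b -> connect Kc a b ->
  z vs = c -> z l < c -> connect Kc vs l -> ~~ connect Kc vs a ->
  exists w, z w = c /\ raisable adj z w.
Proof.
move=> deaths za zb nab cab zvs zl cvl nva.
have far x y : connect Kc vs x -> connect Kc a y -> ~~ connect Kc_ x y.
  move=> vx ay; apply: contraNN nva => /connect_level_strict xy.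
  by rewrite (connect_trans vx (connect_trans xy _)) // (sym_connect_sym Kc_sym).
apply: (@exists_raisable_in_component l (component Kc_ l) l).
- by apply/subsetP => x; rewrite !inE => /connect_level_strict.
- by rewrite inE connect0.
- apply/set0Pn; exists vs; rewrite !inE (sym_connect_sym Kc_sym) cvl andbT.
  by apply/negP => /in_level_connect/(_ zl); rewrite /= zvs ltxx.
- by move=> x; apply: connect_restrict_level_strict.
move=> w; rewrite !inE => /andP [nlw lw]; rewrite leNgt; apply/negP => zw.
have vw : connect Kc vs w := connect_trans cvl lw.
have naw : ~~ connect Kc_ a w by rewrite (sym_connect_sym Kc__sym) far.
have := ltnS_nold_nbelow zl zw za zb (far _ _ vw cab) nlw (far _ _ cvl cab) naw nab lw cab.
by move/leq_trans/(_ deaths); rewrite addn1 ltnn.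
Qed.

Lemma raisable_of_lower_nbr v1 v2 w0 a : (nbelow <= nold + 1)%N ->
  ~ (nold < ncomp /\ nold < nbelow)%N ->
  v1 != v2 -> z v1 = c -> z v2 = c ->
  z w0 = c -> adj w0 a -> z a < c -> ~ lowerable adj z w0 ->
  exists w, z w = c /\ raisable adj z w.
Proof.
move=> deaths not_both v12 zv1 zv2 zw0 w0a za not_low.
have [b [zb w0b nab]] : exists b, [/\ z b < c, adj w0 b & ~~ connect Kc_ a b].
  apply: contra_notP not_low => nob; split; first by exists a; rewrite w0a zw0.
  rewrite zw0 => n1 n2 a1 a2 z1 z2.
  have to_a n : adj w0 n -> z n < c -> connect Kc_ a n.
    by move=> w0n zn; apply/negPn/negP => an; apply: nob; exists n.
  by apply: connect_trans (to_a n2 a2 z2); rewrite (sym_connect_sym Kc__sym) to_a.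
have Kw0 x : adj w0 x -> z x < c -> Kc w0 x.
  by move=> w0x zx; rewrite /Kc /level_rel w0x /= zw0 lexx ltW.
have cab : connect Kc a b.
  apply: connect_trans (connect1 (Kw0 b w0b zb)).
  by rewrite (sym_connect_sym Kc_sym) connect1 ?Kw0.
have no_birth : (ncomp <= nold)%N.
  by rewrite leqNgt; apply/negP => born; apply: not_both; split => //;
    apply: ltn_nold_nbelow nab cab.
pose vs := if w0 == v1 then v2 else v1.
have vsw0 : vs != w0 by rewrite /vs; case: ifP => [/eqP -> | /negbT]; rewrite eq_sym.
have zvs : z vs = c by rewrite /vs; case: ifP.
have [w0vs | nw0vs] := boolP (connect Kc w0 vs).
  exact: raisable_in_merge_component deaths zw0 w0a w0b za zb nab vsw0 zvs w0vs.
have [l zl vsl] : exists2 l, z l < c & connect Kc vs l.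
  by apply: connect_below_of_no_birth; rewrite ?zvs.
apply: (raisable_off_merge_component deaths za zb nab cab zvs zl vsl).
apply: contraNN nw0vs => vsa; rewrite (sym_connect_sym Kc_sym); apply: connect_trans vsa _.
by rewrite (sym_connect_sym Kc_sym) connect1 ?Kw0.
Qed.

Lemma tie_resolvable v1 v2 : typical_dgm (PH0 adj z) ->
  v1 != v2 -> z v1 = c -> z v2 = c ->
  exists w, z w = c /\ (raisable adj z w \/ lowerable adj z w).
Proof.
move=> typ v12 zv1 zv2.
have births : (ncomp <= nold + 1)%N.
  by have := born_alive_le1 c typ; rewrite /born_alive; lia.
have deaths : (nbelow <= nold + 1)%N.
  by have := dying_before_le1 c typ; rewrite /dying_before; lia.
have not_both : ~ (nold < ncomp /\ nold < nbelow)%N.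
  case=> born dies; apply: (not_born_and_dying (c := c) typ).
  by rewrite /born_alive /dying_before; split; lia.
have [[w [zw w_low]] | no_low] := pselect (exists w, z w = c /\ lowerable adj z w).
  by exists w; split => //; right.
have [[w0 [a [zw0 w0a za]]] | no_lower] :=
  pselect (exists w a, [/\ z w = c, adj w a & z a < c]).
  have w0_not_low : ~ lowerable adj z w0 by move=> w0_low; apply: no_low; exists w0.
  have [w [zw w_up]] :=
    raisable_of_lower_nbr deaths not_both v12 zv1 zv2 zw0 w0a za w0_not_low.
  by exists w; split => //; left.
have no_lower_nbr w a : z w = c -> adj w a -> c <= z a.
  by move=> zw wa; rewrite leNgt; apply/negP => za; apply: no_lower; exists w, a.
have [w [zw w_up]] := raisable_of_no_lower_nbr births v12 zv1 zv2 no_lower_nbr.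
by exists w; split => //; left.
Qed.

End TiedLevel.

Lemma exists_gap_above (R : realFieldType) (T : finType) (f : T -> R) x :
  exists2 y, x < y & forall i, ~~ (x < f i <= y).
Proof.
case: (pickP [pred i | x < f i]) => [i0 xi0 | none]; last first.
  by exists (x + 1) => [|i]; [lra | have := none i; rewrite /= => ->].
case: (arg_minP f xi0) => m /= xm mmin.
exists ((x + f m) / 2) => [|i]; first lra.
by apply/negP => /andP [xi im]; have := mmin i xi; lra.
Qed.

Lemma exists_gap_below (R : realFieldType) (T : finType) (f : T -> R) x :
  exists2 y, y < x & forall i, ~~ (y <= f i < x).
Proof.
have [y xy gap] := exists_gap_above (fun i => - f i) (- x).
exists (- y) => [|i]; first lra.
by apply: contraNN (gap i) => /andP [yi ix]; apply/andP; split; lra.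
Qed.

Definition nties (T : finType) (U : eqType) (f : T -> U) : nat :=
  #|[set p : T * T | (p.1 != p.2) && (f p.1 == f p.2)]|.

Lemma nties_update (T : finType) (U : eqType) (f : T -> U) w w' y :
  w' != w -> f w' = f w -> (forall i, i != w -> f i != y) ->
  (nties [eta f with w |-> y] < nties f)%N.
Proof.
move=> w'w fw' fresh; apply: proper_card; rewrite properE; apply/andP; split.
  apply/subsetP => -[i j]; rewrite !inE /=.
  case: (eqVneq i w) => [-> | iw]; case: (eqVneq j w) => [-> | jw] //=.
    by rewrite eq_sym (negPf (fresh _ jw)).
  by rewrite (negPf (fresh _ iw)) andbF.
apply/subsetPn; exists (w', w); rewrite !inE /= w'w fw' eqxx //=.
by rewrite (negPf w'w) -fw' fresh.
Qed.

Section Untie.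
Variables (R : realType) (N : nat) (adj : rel 'I_N).
Hypothesis adj_sym : symmetric adj.

Lemma PH0_untie (z : 'I_N -> R) v1 v2 : v1 != v2 -> z v1 = z v2 ->
  typical_dgm (PH0 adj z) ->
  exists2 z' : 'I_N -> R, PH0 adj z' = PH0 adj z & (nties z' < nties z)%N.
Proof.
move=> v12 zv12 typ.
have [w [zw w_moves]] := tie_resolvable adj_sym typ v12 erefl (esym zv12).
have [w' w'w zw'] : exists2 w', w' != w & z w' = z w.
  case: (eqVneq w v1) => [-> | wv1]; last by exists v1; rewrite 1?eq_sym ?zw.
  by exists v2; rewrite 1?eq_sym.
case: w_moves => [w_up | w_low].
  have [y wy gap] := exists_gap_above z (z w).
  exists [eta z with w |-> y].
    by apply: PH0_raise => // i; apply: contraNN (gap i) => /andP [-> /ltW ->].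
  apply: nties_update w'w zw' _ => i _; apply/eqP => ziy.
  by move: (gap i); rewrite ziy wy lexx.
have [y yw gap] := exists_gap_below z (z w).
exists [eta z with w |-> y]; first exact: PH0_lower.
apply: nties_update w'w zw' _ => i _; apply/eqP => ziy.
by move: (gap i); rewrite ziy yw lexx.
Qed.

Lemma exists_typical_pt_PH0 (z : 'I_N -> R) : typical_dgm (PH0 adj z) ->
  exists z' : 'I_N -> R, typical_pt z' /\ PH0 adj z' = PH0 adj z.
Proof.
have [n] := ubnP (nties z); elim: n z => // n IHn z; rewrite ltnS => zn typ.
have [/injectiveP inj | /injectivePn [v1 [v2 v12 zv12]]] := boolP (injectiveb z).
  by exists z.
have [z' Ez' ltz'] := PH0_untie v12 zv12 typ.
have [|z'' [z''_typ Ez'']] := IHn z' (leq_trans ltz' zn); first by rewrite Ez'.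
by exists z''; rewrite Ez'' Ez'.
Qed.

End Untie.

Lemma ngon_or_star_like_sym (N : nat) (adj : rel 'I_N) :
  is_ngon adj \/ star_like adj -> symmetric adj.
Proof.
case=> [[_ ->] i j | [c [bs [_ _ _ _ adjE]]] i j]; first by rewrite /ngon_adj orbC.
by rewrite !adjE; apply: eq_has => b; rewrite orbC.
Qed.

Theorem lemma1p1 (R : realType) (N : nat) (adj : rel 'I_N) (z : 'I_N -> R) :
  (is_ngon adj \/ star_like adj) ->
  typical_dgm (PH0 adj z) ->
  exists z' : 'I_N -> R, typical_pt z' /\ PH0 adj z' = PH0 adj z.
Proof. by move=> /ngon_or_star_like_sym adj_sym; apply: exists_typical_pt_PH0. Qed.
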